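(* Let $G$ be a graph. For every $A\subseteq V(G)$ let $\operatorname{mm}(A)$ denote the maximum cardinality of a matching in the bipartite graph $G[A,V(G)\setminus A]$. Then $\operatorname{mm}$ is submodular: for all $A,B\subseteq V(G)$, $$\operatorname{mm}(A)+\operatorname{mm}(B)\ \ge\ \operatorname{mm}(A\cup B)+\operatorname{mm}(A\cap B).$$
   Context: Graphs are finite, simple and undirected. For disjoint $A,B\subseteq V(G)$, $G[A,B]$ denotes the bipartite graph with vertex set $A\cup B$ and edge set $\{uv\in E(G): u\in A, v\in B\}$. *)

From mathcomp Require Import all_boot.
Set Implicit Arguments. Unset Strict Implicit. Unset Printing Implicit Defensive.

Definition simple_graph (T : finType) (e : rel T) : Prop :=
  symmetric e /\ irreflexive e.

(* An edge of the bipartite graph G[A, V \ A] is represented as the ordered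
   pair (u, v) with u \in A, v \notin A and e u v (each edge exactly once). *)
Definition cross_edge (T : finType) (e : rel T) (A : {set T}) (p : T * T) : bool :=
  [&& p.1 \in A, p.2 \notin A & e p.1 p.2].

Definition bip_matching (T : finType) (e : rel T) (A : {set T}) (M : {set T * T}) : bool :=
  [forall p in M, cross_edge e A p] &&
  [forall p in M, forall q in M,
     (p != q) ==> [&& p.1 != q.1, p.1 != q.2, p.2 != q.1 & p.2 != q.2]].

Definition mm (T : finType) (e : rel T) (A : {set T}) : nat :=
  \max_(M : {set T * T} | bip_matching e A M) #|M|.

From mathcomp Require Import all_boot.

Set Implicit Arguments. Unset Strict Implicit. Unset Printing Implicit Defensive.

(* Take maximum matchings M1 of G[A ∪ B, V ∖ (A ∪ B)] and M2 of
   G[A ∩ B, V ∖ (A ∩ B)].  Each edge of M1 or M2 is a cross edge of A or of B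
   (or of both), and the only clashes are between an M1-edge and an M2-edge
   sharing a vertex of A ∩ B or a vertex outside A ∪ B.  These clashes chain
   into alternating paths and cycles, which we walk in a fixed direction
   ([alt_step]: outside A ∪ B follow M1 into A ∩ B, inside A ∩ B follow M2 out
   of A ∪ B).  An edge whose side is forced, because an endpoint lies in A ∖ B
   or B ∖ A, can only occur where such a walk stops.  Colouring every edge
   according to whether the walk through it stops at an edge forced towards B
   ([leads_to_B]) therefore splits M1 ∪ M2 into a matching of G[A, V ∖ A] and
   a matching of G[B, V ∖ B]. *)

Section Reachability.

Variables (T : finType) (f : T -> T) (P : pred T).
Hypothesis P_fixed : forall x, P x -> f x = x.

Definition reaches (x : T) : bool := [exists s, P s && fconnect f x s].

Lemma reaches_f x : reaches (f x) = reaches x.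
Proof.
apply/existsP/existsP => -[s /andP[Ps xs]]; exists s; rewrite Ps /=.
  by rewrite fconnect_eqVf xs orbT.
move: xs; rewrite fconnect_eqVf => /orP[/eqP exs|//].
by rewrite exs P_fixed ?connect0.
Qed.

Lemma reaches_fixed x : f x = x -> reaches x = P x.
Proof.
move=> fx; apply/existsP/idP => [[s /andP[Ps xs]]|Px].
  by move: (iter_findex xs); rewrite iter_fix // => ->.
by exists x; rewrite Px connect0.
Qed.

End Reachability.

Definition edge_disjoint (T : eqType) (p q : T * T) : bool :=
  [&& p.1 != q.1, p.1 != q.2, p.2 != q.1 & p.2 != q.2].

Section Matchings.

Variables (T : finType) (e : rel T).
Implicit Types (A : {set T}) (M X Y : {set T * T}).

Lemma bip_matchingP A M :
  reflect ({in M, forall p, cross_edge e A p} /\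
           {in M &, forall p q, p != q -> edge_disjoint p q})
          (bip_matching e A M).
Proof.
apply: (iffP andP) => [[/forall_inP cM /forall_inP dM]|[cM dM]]; split.
- exact: cM.
- by move=> p q pM qM; move/forall_inP: (dM p pM) => /(_ q qM)/implyP.
- exact/forall_inP.
- apply/forall_inP => p pM; apply/forall_inP => q qM; exact/implyP/dM.
Qed.

Lemma bip_matching_cross A M p : bip_matching e A M -> p \in M -> cross_edge e A p.
Proof. by case/bip_matchingP => cM _; apply: cM. Qed.

Lemma bip_matching_head_inj A M u u' v :
  bip_matching e A M -> (u, v) \in M -> (u', v) \in M -> u = u'.
Proof.
case/bip_matchingP => _ dM uv u'v; apply/eqP; apply: contraT => ne.
move: (dM _ _ uv u'v); rewrite xpair_eqE negb_and ne => /(_ isT)/and4P[_ _ _].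
by rewrite eqxx.
Qed.

Lemma bip_matching_tail_inj A M u v v' :
  bip_matching e A M -> (u, v) \in M -> (u, v') \in M -> v = v'.
Proof.
case/bip_matchingP => _ dM uv uv'; apply/eqP; apply: contraT => ne.
move: (dM _ _ uv uv'); rewrite xpair_eqE negb_and ne orbT => /(_ isT)/and4P[].
by rewrite eqxx.
Qed.

Lemma bip_matching_sub A A' M X :
  bip_matching e A' M -> X \subset M -> {in X, forall p, cross_edge e A p} ->
  bip_matching e A X.
Proof.
case/bip_matchingP => _ dM /subsetP sXM cX; apply/bip_matchingP; split=> //.
by move=> p q /sXM pM /sXM qM; apply: dM.
Qed.

Lemma cross_edge_disjoint A p q :
  cross_edge e A p -> cross_edge e A q -> p.1 != q.1 -> p.2 != q.2 ->
  edge_disjoint p q.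
Proof.
case/and3P=> p1A p2A _ /and3P[q1A q2A _] ne1 ne2; rewrite /edge_disjoint ne1 ne2 /=.
apply/and3P; split=> //.
  by apply: contraNneq q2A => <-.
by apply: contraNneq p2A => ->.
Qed.

Lemma bip_matchingU A X Y :
  bip_matching e A X -> bip_matching e A Y ->
  {in X & Y, forall p q, (p.1 != q.1) && (p.2 != q.2)} ->
  bip_matching e A (X :|: Y).
Proof.
move=> mX mY dXY; have cX := bip_matching_cross mX; have cY := bip_matching_cross mY.
case/bip_matchingP: mX => _ dX; case/bip_matchingP: mY => _ dY.
apply/bip_matchingP; split=> [p|p q]; rewrite !inE.
  by case/orP; [apply: cX | apply: cY].
case/orP=> [pX|pY] /orP[qX|qY] ne; try by [apply: dX | apply: dY].
  by case/andP: (dXY _ _ pX qY); apply: cross_edge_disjoint; [apply: cX | apply: cY].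
case/andP: (dXY _ _ qX pY) => ne1 ne2.
by apply: cross_edge_disjoint; [apply: cY | apply: cX | rewrite eq_sym ..].
Qed.

Lemma cardsU_edge_disjoint X Y :
  {in X & Y, forall p q : T * T, (p.1 != q.1) && (p.2 != q.2)} ->
  #|X :|: Y| = #|X| + #|Y|.
Proof.
move=> dXY; rewrite -cardsUI; have -> : X :&: Y = set0; last by rewrite cards0 addn0.
by apply/setP => p; rewrite !inE; apply/negP => /andP[/dXY/[apply]]; rewrite eqxx.
Qed.

Lemma mm_attained A : exists2 M, bip_matching e A M & #|M| = mm e A.
Proof.
have m0 : bip_matching e A set0 by apply/bip_matchingP; split=> p; rewrite inE.
by rewrite /mm (bigmax_eq_arg set0 m0); case: arg_maxnP => // M mM _; exists M.
Qed.

Lemma bip_matching_leq_mm A M : bip_matching e A M -> #|M| <= mm e A.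
Proof. exact: leq_bigmax_cond. Qed.

End Matchings.

Section Uncrossing.

Variables (T : finType) (e : rel T) (A B : {set T}) (M1 M2 : {set T * T}).
Hypotheses (m1 : bip_matching e (A :|: B) M1) (m2 : bip_matching e (A :&: B) M2).

Definition alt_step (w : T) : T :=
  if [pick u | ((u, w) \in M1) && (u \in A :&: B)] is Some u then u
  else odflt w [pick y | ((w, y) \in M2) && (y \notin A :|: B)].

Definition exits_to_B (s : T) : bool :=
  [exists w in B :\: A, ((w, s) \in M1) || ((s, w) \in M2)].

Definition leads_to_B : pred T := reaches alt_step exits_to_B.

Lemma M1_tail_notin u v : (u, v) \in M1 -> v \notin A :|: B.
Proof. by case/(bip_matching_cross m1)/and3P. Qed.

Lemma M2_head_in x y : (x, y) \in M2 -> x \in A :&: B.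
Proof. by case/(bip_matching_cross m2)/and3P. Qed.

Lemma M2_tail_notin x y : (x, y) \in M2 -> y \notin A :&: B.
Proof. by case/(bip_matching_cross m2)/and3P. Qed.

Lemma M1_tail_not_M2_head u v y : (u, v) \in M1 -> (v, y) \in M2 -> False.
Proof.
move=> /M1_tail_notin; rewrite inE negb_or => /andP[vA _] /M2_head_in.
by rewrite inE (negbTE vA).
Qed.

Lemma alt_step_M1_inner u v : (u, v) \in M1 -> u \in A :&: B -> alt_step v = u.
Proof.
move=> uv uAB; rewrite /alt_step; case: pickP => [u' /andP[u'v _]|/(_ u)].
  exact: bip_matching_head_inj m1 u'v uv.
by rewrite uv uAB.
Qed.

Lemma alt_step_M2_inner x y : (x, y) \in M2 -> y \notin A :|: B -> alt_step x = y.
Proof.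
move=> xy yAB; rewrite /alt_step; case: pickP => [u /andP[ux _]|_].
  by case: (M1_tail_not_M2_head ux xy).
case: pickP => [y' /andP[xy' _]|/(_ y)]; last by rewrite xy yAB.
exact: bip_matching_tail_inj m2 xy' xy.
Qed.

Lemma alt_step_M1_end u v : (u, v) \in M1 -> u \notin A :&: B -> alt_step v = v.
Proof.
move=> uv uAB; rewrite /alt_step; case: pickP => [u' /andP[u'v]|_].
  by rewrite (bip_matching_head_inj m1 u'v uv) (negbTE uAB).
by case: pickP => [y /andP[vy _]|//]; case: (M1_tail_not_M2_head uv vy).
Qed.

Lemma alt_step_M2_end x y : (x, y) \in M2 -> y \in A :|: B -> alt_step x = x.
Proof.
move=> xy yAB; rewrite /alt_step; case: pickP => [u /andP[ux _]|_].
  by case: (M1_tail_not_M2_head ux xy).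
case: pickP => [y' /andP[xy']|//].
by rewrite (bip_matching_tail_inj m2 xy' xy) yAB.
Qed.

Lemma exits_to_B_M1_end u v :
  (u, v) \in M1 -> u \notin A :&: B -> exits_to_B v = (u \in B).
Proof.
move=> uv uAB; apply/exists_inP/idP => [[w wBA /orP[wv|vy]]|uB].
- by rewrite -(bip_matching_head_inj m1 wv uv); case/setDP: wBA.
- by case: (M1_tail_not_M2_head uv vy).
- by exists u; rewrite ?uv // inE uB andbT; apply: contra uAB => uA; rewrite inE uA.
Qed.

Lemma exits_to_B_M2_end x y :
  (x, y) \in M2 -> y \in A :|: B -> exits_to_B x = (y \in B).
Proof.
move=> xy yAB; apply/exists_inP/idP => [[w wBA /orP[ux|xw]]|yB].
- by case: (M1_tail_not_M2_head ux xy).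
- by rewrite -(bip_matching_tail_inj m2 xw xy); case/setDP: wBA.
- exists y; rewrite ?xy ?orbT // inE yB andbT.
  by apply: contra (M2_tail_notin xy) => yA; rewrite inE yA.
Qed.

Lemma exits_to_B_fixed s : exits_to_B s -> alt_step s = s.
Proof.
case/exists_inP => w /setDP[wB wA] /orP[ws|sw].
  by apply: alt_step_M1_end ws _; rewrite inE negb_and wA.
by apply: alt_step_M2_end sw _; rewrite inE wB orbT.
Qed.

Lemma leads_to_B_M1 u v :
  (u, v) \in M1 -> leads_to_B v = if u \in A :&: B then leads_to_B u else u \in B.
Proof.
move=> uv; case: ifP => uAB.
  rewrite /leads_to_B -(alt_step_M1_inner uv uAB) reaches_f //.
  exact: exits_to_B_fixed.
rewrite /leads_to_B reaches_fixed; first exact: exits_to_B_M1_end uv (negbT uAB).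
exact: alt_step_M1_end uv (negbT uAB).
Qed.

Lemma leads_to_B_M2 x y :
  (x, y) \in M2 -> leads_to_B x = if y \in A :|: B then y \in B else leads_to_B y.
Proof.
move=> xy; case: ifP => yAB; last first.
  rewrite /leads_to_B -(alt_step_M2_inner xy (negbT yAB)) reaches_f //.
  exact: exits_to_B_fixed.
rewrite /leads_to_B reaches_fixed; first exact: exits_to_B_M2_end xy yAB.
exact: alt_step_M2_end xy yAB.
Qed.

Lemma M1_M2_endpoints_distinct p q : p \in M1 -> q \in M2 ->
  leads_to_B p.2 != leads_to_B q.1 -> (p.1 != q.1) && (p.2 != q.2).
Proof.
case: p q => u v [x y] /= uv xy; apply: contraR; rewrite negb_and !negbK.
case/orP=> /eqP E; subst.
  by rewrite (leads_to_B_M1 uv) (M2_head_in xy).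
by rewrite (leads_to_B_M2 xy) (negbTE (M1_tail_notin uv)).
Qed.

Lemma M1_cross p : p \in M1 -> cross_edge e (if leads_to_B p.2 then B else A) p.
Proof.
case: p => u v uv; have /and3P[/= uAB vAB euv] := bip_matching_cross m1 uv.
move: vAB; rewrite /cross_edge /= inE negb_or euv andbT => /andP[vA vB].
rewrite (leads_to_B_M1 uv); move: uAB; rewrite !inE.
case uA: (u \in A); case uB: (u \in B) => //= _;
  by case: (leads_to_B u); rewrite ?uA ?uB ?vA ?vB.
Qed.

Lemma M2_cross p : p \in M2 -> cross_edge e (if leads_to_B p.1 then A else B) p.
Proof.
case: p => x y xy; have /and3P[/= xAB yAB exy] := bip_matching_cross m2 xy.
move: xAB; rewrite /cross_edge /= inE exy andbT => /andP[xA xB].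
rewrite (leads_to_B_M2 xy); move: yAB; rewrite !inE.
case yA: (y \in A); case yB: (y \in B) => //= _;
  by case: (leads_to_B y); rewrite ?xA ?xB ?yA ?yB.
Qed.

Lemma matchings_uncross : #|M1| + #|M2| <= mm e A + mm e B.
Proof.
pose A_side1 := [set p : T * T | ~~ leads_to_B p.2].
pose A_side2 := [set p : T * T | leads_to_B p.1].
pose MA := (M1 :&: A_side1) :|: (M2 :&: A_side2).
pose MB := (M1 :\: A_side1) :|: (M2 :\: A_side2).
have dA : {in M1 :&: A_side1 & M2 :&: A_side2,
            forall p q, (p.1 != q.1) && (p.2 != q.2)}.
  move=> p q; rewrite !inE => /andP[pM1 /negbTE lp] /andP[qM2 lq].
  by apply: M1_M2_endpoints_distinct; rewrite ?lp ?lq.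
have dB : {in M1 :\: A_side1 & M2 :\: A_side2,
            forall p q, (p.1 != q.1) && (p.2 != q.2)}.
  move=> p q; rewrite !inE negbK => /andP[lp pM1] /andP[/negbTE lq qM2].
  by apply: M1_M2_endpoints_distinct; rewrite ?lp ?lq.
have mA : bip_matching e A MA.
  apply: bip_matchingU dA.
    apply: bip_matching_sub m1 (subsetIl _ _) _ => p.
    rewrite !inE => /andP[pM1 /negbTE lp].
    by have := M1_cross pM1; rewrite lp.
  apply: bip_matching_sub m2 (subsetIl _ _) _ => p; rewrite !inE => /andP[pM2 lp].
  by have := M2_cross pM2; rewrite lp.
have mB : bip_matching e B MB.
  apply: bip_matchingU dB.
    apply: bip_matching_sub m1 (subsetDl _ _) _ => p.
    rewrite !inE negbK => /andP[lp pM1].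
    by have := M1_cross pM1; rewrite lp.
  apply: bip_matching_sub m2 (subsetDl _ _) _ => p.
  rewrite !inE => /andP[/negbTE lp pM2].
  by have := M2_cross pM2; rewrite lp.
have := leq_add (bip_matching_leq_mm mA) (bip_matching_leq_mm mB).
by rewrite !cardsU_edge_disjoint // addnACA !cardsID.
Qed.

End Uncrossing.

Theorem theorem3 (T : finType) (e : rel T) (He : simple_graph e)
  (A B : {set T}) :
  mm e (A :|: B) + mm e (A :&: B) <= mm e A + mm e B.
Proof.
have [M1 m1 <-] := mm_attained e (A :|: B).
have [M2 m2 <-] := mm_attained e (A :&: B).
exact: matchings_uncross m1 m2.
Qed.
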